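(* Let $0<p<1$ and let $X_p$ be a $\mathbb{P}^1(\mathbb{R})$-valued random variable satisfying $X_p \sim \frac{1}{X_p}+\epsilon_p$ with $\epsilon_p\sim\mathrm{Bernoulli}(p)$ independent of $X_p$. Then \[ \mathbb{E}\big[\log(X_p)\mathbf{1}_{\{X_p<1\}}\big]=(p-1)\,\mathbb{E}\big[\log(X_p)\mathbf{1}_{\{X_p>1\}}\big], \] \[ \mathbb{E}\big[\log(X_p)\mathbf{1}_{\{X_p>1\}}\big]=\frac1p\,\mathbb{E}[\log X_p], \qquad \mathbb{E}\big[\log(X_p)\mathbf{1}_{\{X_p<1\}}\big]=\frac{p-1}{p}\,\mathbb{E}[\log X_p]. \]
   Context: $\mathbb{P}^1(\mathbb{R})$ is identified with $\mathbb{R}\cup\{\infty\}$ (with $1/0=\infty$, $1/\infty=0$). $\epsilon_p\sim\mathrm{Bernoulli}(p)$ means $\mathbb{P}(\epsilon_p=1)=p$, $\mathbb{P}(\epsilon_p=0)=1-p$. The law of such $X_p$ is unique, atomless, $X_p\in(0,\infty)$ a.s., and $0<\mathbb{E}[\log X_p]<\infty$. *)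

From HB Require Import structures.
From mathcomp Require Import all_boot all_order all_algebra.
From mathcomp Require Import all_classical all_reals all_analysis.
Set Implicit Arguments. Unset Strict Implicit. Unset Printing Implicit Defensive.
Import Order.TTheory GRing.Theory Num.Theory.
Local Open Scope classical_set_scope.
Local Open Scope ring_scope.

(* The real projective line P^1(R) = R ∪ {∞}: [Some r] is the real r,
   [None] is the point at infinity. *)
Definition P1 (R : realType) : Type := option R.

HB.instance Definition _ (R : realType) := Choice.on (P1 R).
HB.instance Definition _ (R : realType) := isPointed.Build (P1 R) None.

Section P1_measurable.
Variable R : realType.

(* Borel sigma-algebra of P^1(R): a set is measurable iff its trace on R
   is a Borel set (the point at infinity is a closed singleton). *)
Definition P1_measurable : set (set (P1 R)) :=
  fun A => measurable (Some @^-1` A : set R).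

Lemma P1_measurable0 : P1_measurable set0.
Proof. by rewrite /P1_measurable preimage_set0; exact: measurable0. Qed.

Lemma P1_measurableC A : P1_measurable A -> P1_measurable (~` A).
Proof. by rewrite /P1_measurable preimage_setC => mA; exact: measurableC. Qed.

Lemma P1_measurable_bigcup (F : (set (P1 R))^nat) :
  (forall i, P1_measurable (F i)) -> P1_measurable (\bigcup_i F i).
Proof. by rewrite /P1_measurable preimage_bigcup => mF; exact: bigcupT_measurable. Qed.

HB.instance Definition _ := @isMeasurable.Build default_measure_display (P1 R)
  P1_measurable P1_measurable0 P1_measurableC P1_measurable_bigcup.

Definition P1inv (x : P1 R) : P1 R :=
  match x with
  | Some r => if r == 0 then None else Some r^-1
  | None => Some 0
  end.

Definition P1addr (x : P1 R) (e : R) : P1 R :=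
  match x with
  | Some r => Some (r + e)
  | None => None
  end.

(* log on P^1(R) with values in the extended reals; log ∞ = +oo.
   (Only used where X > 0 a.s.; the value on nonpositive reals is the
   library's ln convention and is irrelevant, being a null event.) *)
Definition P1log (x : P1 R) : \bar R :=
  match x with
  | Some r => (ln r)%:E
  | None => +oo%E
  end.

Definition P1lt1 (x : P1 R) : bool :=
  match x with Some r => r < 1 | None => false end.
Definition P1gt1 (x : P1 R) : bool :=
  match x with Some r => 1 < r | None => true end.

End P1_measurable.

From HB Require Import structures.
From mathcomp Require Import all_boot all_order all_algebra.
From mathcomp Require Import all_classical all_reals all_analysis.
From mathcomp Require Import measurable_realfun ring.
Set Implicit Arguments. Unset Strict Implicit. Unset Printing Implicit Defensive.
Import Order.TTheory GRing.Theory Num.Theory.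
Local Open Scope classical_set_scope.
Local Open Scope ring_scope.

(* Split log on P^1(R) into its positive and negative parts log^+ and log^-,
   so that the three integrals of the statement are E[log^+ X], -E[log^- X]
   and E[log^+ X] - E[log^- X].  As X has the law of Y = 1/X + eps, we get
   E[log^- X] = E[log^- Y].  Since X > 0 a.s., log^- Y = log^+ X on {eps = 0},
   while on {eps = 1} we have Y = 1/X + 1 > 1 and log^- Y = 0.  Independence of
   X and eps then gives E[log^- X] = P(eps = 0) E[log^+ X] = (1 - p) E[log^+ X],
   and the three identities follow by linear algebra, E[log^+ X] being finite
   because log X is integrable. *)

Section measurable_P1.
Variable R : realType.

Lemma measurable_fun_P1 d' (U : measurableType d') (f : P1 R -> U) :
  measurable_fun setT (f \o Some) -> measurable_fun setT f.
Proof.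
by move=> mf _ B mB; rewrite setTI; have := mf measurableT B mB; rewrite setTI.
Qed.

Lemma measurable_Some : measurable_fun setT (@Some R : R -> P1 R).
Proof. by move=> _ A mA; rewrite setTI. Qed.

Lemma measurable_inv : measurable_fun [set: R] GRing.inv.
Proof.
(* powR has the same junk value 0 `^ (-1) = 0 as the inverse 0^-1 = 0 *)
have -> : GRing.inv = fun x : R => if 0 <= x then x `^ (-1) else - (- x) `^ (-1).
  apply/funext => x; case: ifPn => [x0|]; first by rewrite powR_inv1.
  by rewrite -ltNge => x0; rewrite powR_inv1 ?invrN ?opprK // oppr_ge0 ltW.
apply: measurable_fun_ifT.
- by apply: measurable_fun_ler => //; exact: measurable_cst.
- exact: measurable_powR.
- apply: measurable_funN.
  change (measurable_fun setT ((@powR R ^~ (-1)) \o (fun x => - x))).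
  apply: measurableT_comp; first exact: measurable_powR.
  exact: measurable_funN.
Qed.

Lemma measurable_P1inv : measurable_fun setT (@P1inv R).
Proof.
apply: measurable_fun_P1 => /=; apply: measurable_fun_ifT.
- by apply: measurable_fun_eqr => //; exact: measurable_cst.
- exact: measurable_cst.
- apply: (measurableT_comp (f := @Some R : R -> P1 R)).
    exact: measurable_Some.
  exact: measurable_inv.
Qed.

Definition P1val (x : P1 R) : R := if x is Some r then r else 0.

Lemma measurable_P1val : measurable_fun setT P1val.
Proof. by apply: measurable_fun_P1; exact: measurable_id. Qed.

Lemma measurable_P1addr d (T : measurableType d) (f : T -> P1 R) (e : T -> R) :
  measurable_fun setT f -> measurable_fun setT e ->
  measurable_fun setT (fun w => P1addr (f w) (e w)).
Proof.
move=> mf me.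
have -> : (fun w => P1addr (f w) (e w)) =
    fun w => if f w == None then None else Some (P1val (f w) + e w).
  by apply/funext => w; case: (f w).
apply: measurable_fun_ifT.
- apply: (measurableT_comp (f := fun x : P1 R => x == None)) mf.
  by apply: measurable_fun_P1; exact: measurable_cst.
- exact: measurable_cst.
- apply: (measurableT_comp (f := @Some R : R -> P1 R)).
    exact: measurable_Some.
  exact/measurable_funD/me/(measurableT_comp measurable_P1val mf).
Qed.

Lemma measurable_P1log : measurable_fun setT (@P1log R).
Proof.
by apply: measurable_fun_P1; apply/measurable_EFinP; exact: measurable_ln.
Qed.

End measurable_P1.

Section P1log_parts.
Variable R : realType.

Lemma P1log_gt1 x : (if P1gt1 x then P1log x else 0)%E = ((@P1log R)^\+ x)%E.
Proof.
case: x => [r|] /=; last by rewrite funeposE /= maxEge leey.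
rewrite funeposE /= -[0%R]/(0%:E); case: ltrP => r1.
- by rewrite max_l // lee_fin ltW // ln_gt0.
- by rewrite max_r // lee_fin ln_le0.
Qed.

Lemma P1log_lt1 x : (if P1lt1 x then P1log x else 0)%E = (- (@P1log R)^\- x)%E.
Proof.
case: x => [r|] /=; last by rewrite funenegE /= max_r ?oppe0.
rewrite funenegE /= -[0%R]/(0%:E); case: ltrP => r1.
- by rewrite max_l /= ?opprK // lee_fin oppr_ge0 ln_le0 // ltW.
- by rewrite max_r ?oppe0 // lee_fin oppr_le0 ln_ge0.
Qed.

Lemma P1logn_inv_addr0 r : 0 < r ->
  ((@P1log R)^\- (P1addr (P1inv (Some r)) 0) = (@P1log R)^\+ (Some r))%E.
Proof.
move=> r0; rewrite funenegE funeposE /= gt_eqF // /P1addr /= addr0.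
by rewrite lnV ?posrE // opprK.
Qed.

Lemma P1logn_inv_addr1 r : 0 < r ->
  ((@P1log R)^\- (P1addr (P1inv (Some r)) 1) = 0)%E.
Proof.
move=> r0; rewrite /= gt_eqF // funenegE /= max_r // lee_fin oppr_le0 ln_ge0 //.
by rewrite lerDr invr_ge0 ltW.
Qed.

End P1log_parts.

Section law_and_independence.
Context d (T : measurableType d) (R : realType).
Local Open Scope ereal_scope.

Lemma ge0_integral_pushforwardT (mu : {measure set T -> \bar R})
    d' (U : measurableType d') (X : T -> U) (mX : measurable_fun setT X)
    (f : U -> \bar R) :
  measurable_fun setT f -> (forall u, 0 <= f u) ->
  \int[pushforward mu X]_u f u = \int[mu]_w f (X w).
Proof. by move=> mf f0; rewrite ge0_integral_pushforward // preimage_setT. Qed.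

Lemma ge0_integral_eq_law (mu : {measure set T -> \bar R})
    d' (U : measurableType d') (X Y : T -> U) (f : U -> \bar R) :
  measurable_fun setT X -> measurable_fun setT Y ->
  (forall A, measurable A -> mu (X @^-1` A) = mu (Y @^-1` A)) ->
  measurable_fun setT f -> (forall u, 0 <= f u) ->
  \int[mu]_w f (X w) = \int[mu]_w f (Y w).
Proof.
move=> mX mY XY mf f0.
rewrite -(ge0_integral_pushforwardT mu mX) //.
rewrite -(ge0_integral_pushforwardT mu mY) //.
by apply: eq_measure_integral => A mA _; exact: XY.
Qed.

Lemma ge0_integral_mrestr (mu : {measure set T -> \bar R}) (E : set T)
    (mE : measurable E) (g : T -> \bar R) :
  measurable_fun setT g -> (forall w, 0 <= g w) ->
  \int[mrestr mu mE]_w g w = \int[mu]_(w in E) g w.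
Proof.
move=> mg g0.
rewrite -(setUv E) ge0_integral_setU //; last 3 first.
- exact: measurableC.
- by rewrite setUv.
- by apply/disj_set2P; rewrite setICr.
have -> : \int[mrestr mu mE]_(w in ~` E) g w = 0.
  rewrite (eq_measure_integral mzero) ?integral_measure_zero // => A mA AE.
  move/subsets_disjoint: AE; rewrite setCK => AE0.
  by rewrite /= /mrestr AE0 measure0.
rewrite adde0; apply: eq_measure_integral => A mA AE.
by rewrite /= /mrestr setIidl.
Qed.

Lemma ge0_integral_indep (P : probability T R) d' d'' (U : measurableType d')
    (V : measurableType d'') (X : T -> U) (e : T -> V) (B : set V)
    (f : U -> \bar R) :
  measurable_fun setT X -> measurable_fun setT e -> measurable B ->
  (forall A, measurable A ->
     P (X @^-1` A `&` e @^-1` B) = P (X @^-1` A) * P (e @^-1` B)) ->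
  measurable_fun setT f -> (forall u, 0 <= f u) ->
  \int[P]_(w in e @^-1` B) f (X w) = P (e @^-1` B) * \int[P]_w f (X w).
Proof.
move=> mX me mB indep mf f0.
have mE : measurable (e @^-1` B) by rewrite -[_ @^-1` _]setTI; exact: me.
have PE := fineK (fin_num_measure P _ mE).
pose c : {nonneg R} := NngNum (fine_ge0 (measure_ge0 P (e @^-1` B))).
(* the law of X under P restricted to {e \in B} is P(e \in B) times its law *)
rewrite -ge0_integral_mrestr //; last exact: measurableT_comp mf mX.
rewrite -!(ge0_integral_pushforwardT _ mX) // -PE -[fine _]/(c%:num).
rewrite -ge0_integral_mscale //.
apply: eq_measure_integral => A mA _.
change (P (X @^-1` A `&` e @^-1` B) =
  (fine (P (e @^-1` B)))%:E * P (X @^-1` A)).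
by rewrite indep // PE muleC.
Qed.

Lemma probability1_ae (P : probability T R) (A : set T) :
  measurable A -> P A = 1 -> {ae P, forall w, A w}.
Proof.
move=> mA PA; exists (~` A); split => //; first exact: measurableC.
by rewrite probability_setC // PA subee.
Qed.

End law_and_independence.

Section inverse_plus_bernoulli.
Variables (R : realType) (d : measure_display) (T : measurableType d)
  (P : probability T R) (p : R) (X : T -> P1 R) (eps : T -> R).
Hypotheses (mX : measurable_fun setT X) (meps : measurable_fun setT eps).
Hypothesis Peps1 : P (eps @^-1` [set 1]) = p%:E.
Hypothesis Peps0 : P (eps @^-1` [set 0]) = (1 - p)%:E.
Hypothesis indep : forall (A : set (P1 R)) (B : set R),
  measurable A -> measurable B ->
  P (X @^-1` A `&` eps @^-1` B) = (P (X @^-1` A) * P (eps @^-1` B))%E.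
Hypothesis law : forall A : set (P1 R), measurable A ->
  P (X @^-1` A) = P ((fun w => P1addr (P1inv (X w)) (eps w)) @^-1` A).
Hypothesis Xpos : P [set w | exists r : R, X w = Some r /\ 0 < r] = 1%E.

Let measurable_eps_set1 e : measurable (eps @^-1` [set e]).
Proof. by rewrite -[_ @^-1` _]setTI; exact: meps. Qed.

Lemma eps01_ae : {ae P, forall w, eps w = 0 \/ eps w = 1}.
Proof.
apply: (probability1_ae (A := eps @^-1` [set 0] `|` eps @^-1` [set 1])).
  exact: measurableU.
rewrite measureU //; last first.
  by apply/seteqP; split => w //= [-> /esym/eqP]; rewrite oner_eq0.
transitivity ((1 - p)%:E + p%:E)%E; last by rewrite -EFinD subrK.
by congr (_ + _)%E; [exact: Peps0|exact: Peps1].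
Qed.

Lemma X_pos_ae : {ae P, forall w, exists r, X w = Some r /\ 0 < r}.
Proof.
apply: probability1_ae Xpos.
have -> : [set w | exists r, X w = Some r /\ 0 < r] =
    X @^-1` [set x : P1 R | exists r, x = Some r /\ 0 < r] by [].
rewrite -[X @^-1` _]setTI; apply: mX => //.
rewrite /measurable /= /P1_measurable.
rewrite (_ : Some @^-1` _ = `]0, +oo[%classic); first exact: measurable_itv.
apply/seteqP; split => x /=; rewrite in_itv /= andbT; first by case=> r [[<-]].
by move=> x0; exists x.
Qed.

Lemma integral_P1logn :
  (\int[P]_w (@P1log R)^\- (X w)
    = (1 - p)%:E * \int[P]_w (@P1log R)^\+ (X w))%E.
Proof.
pose Y w := P1addr (P1inv (X w)) (eps w).
have mY : measurable_fun setT Y.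
  apply: measurable_P1addr meps.
  by apply: (measurableT_comp (f := @P1inv R)) mX; exact: measurable_P1inv.
have mlogp := measurable_funepos (@measurable_P1log R).
have mlogn := measurable_funeneg (@measurable_P1log R).
rewrite (ge0_integral_eq_law mX mY law mlogn) //.
rewrite -Peps0 -(ge0_integral_indep mX meps (measurable_set1 0) _ mlogp) //;
  last by move=> A mA; exact: indep (measurable_set1 0).
rewrite [RHS]integral_mkcond; apply: ge0_ae_eq_integral => //.
- exact: measurableT_comp mlogn mY.
- apply/(measurable_restrictT _ _).1 => //; apply: measurable_funTS.
  exact: measurableT_comp mlogp mX.
- by move=> w _; rewrite /patch; case: ifP.
apply: filterS2 eps01_ae X_pos_ae => w e01 [r [Xw r0]] _.
rewrite /patch /Y Xw; case: e01 => ew; rewrite ew.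
- by rewrite mem_set // P1logn_inv_addr0.
- rewrite memNset ?P1logn_inv_addr1 //= ew => /eqP.
  by rewrite oner_eq0.
Qed.

End inverse_plus_bernoulli.

Theorem lemma3p2 (R : realType) (d : measure_display) (T : measurableType d)
  (P : probability T R) (p : R) (X : T -> P1 R) (eps : T -> R) :
  0 < p -> p < 1 ->
  measurable_fun setT X -> measurable_fun setT eps ->
  P (eps @^-1` [set 1]) = p%:E ->
  P (eps @^-1` [set 0]) = (1 - p)%:E ->
  (forall (A : set (P1 R)) (B : set R), measurable A -> measurable B ->
     P (X @^-1` A `&` eps @^-1` B) = (P (X @^-1` A) * P (eps @^-1` B))%E) ->
  (forall A : set (P1 R), measurable A ->
     P (X @^-1` A) = P ((fun w => P1addr (P1inv (X w)) (eps w)) @^-1` A)) ->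
  P [set w | exists r : R, X w = Some r /\ 0 < r] = 1%E ->
  P.-integrable setT (fun w => P1log (X w)) ->
  (\int[P]_w (if P1lt1 (X w) then P1log (X w) else 0%E)
     = (p - 1)%:E * \int[P]_w (if P1gt1 (X w) then P1log (X w) else 0%E))%E
  /\ (\int[P]_w (if P1gt1 (X w) then P1log (X w) else 0%E)
     = (p^-1)%:E * \int[P]_w P1log (X w))%E
  /\ (\int[P]_w (if P1lt1 (X w) then P1log (X w) else 0%E)
     = ((p - 1) / p)%:E * \int[P]_w P1log (X w))%E.
Proof.
move=> p0 _ mX meps Peps1 Peps0 indep law Xpos intL.
have Egt : (\int[P]_w (if P1gt1 (X w) then P1log (X w) else 0)
    = \int[P]_w (@P1log R)^\+ (X w))%E.
  by apply: eq_integral => w _; exact: P1log_gt1.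
have Elt : (\int[P]_w (if P1lt1 (X w) then P1log (X w) else 0)
    = - \int[P]_w (@P1log R)^\- (X w))%E.
  rewrite -integral_ge0N; last by move=> w _; exact: funeneg_ge0.
  by apply: eq_integral => w _; exact: P1log_lt1.
have Elog : (\int[P]_w P1log (X w)
    = \int[P]_w (@P1log R)^\+ (X w) - \int[P]_w (@P1log R)^\- (X w))%E.
  by rewrite integralE funepos_comp funeneg_comp.
rewrite Egt Elt Elog (integral_P1logn mX meps Peps1 Peps0 indep law Xpos).
have := integrable_fin_num measurableT (integrable_funepos measurableT intL).
rewrite funepos_comp.
move: (\int[P]_w _)%E => a /fineK <-.
have pn0 : p != 0 by rewrite gt_eqF.
by split; [|split]; rewrite -?EFinM -?EFinN -?EFinB -?EFinM; congr EFin; field.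
Qed.
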